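(* Let $G$ be a connected $d$-regular simple graph of order $n$, where $d\ge 3$. Then \[ \mathscr{K}_{nb}(G)=\frac{(d-2)\,\mathscr{K}_e(G)}{d}+2n+\frac{1}{d-2}-\frac{n}{d}. \]
   Context: Kemeny's constant of an irreducible finite Markov chain with transition matrix $P$ whose eigenvalues (with multiplicity) are $1=\rho_1,\rho_2,\dots,\rho_N$ (with $1$ simple) is $\mathscr{K}(P)=\sum_{i=2}^{N}\frac{1}{1-\rho_i}$; equivalently $\sum_{j\neq i}\pi_jm_{ij}$ with $\pi$ the stationary distribution and $m_{ij}$ mean first passage times. Arcs of $G$: for each edge $\{u,v\}$ the two ordered pairs $(u,v),(v,u)$. The edge Kemeny's constant $\mathscr{K}_e(G)$ is Kemeny's constant of the chain on arcs where from $(u,v)$ one moves to $(v,w)$ with probability $1/\deg(v)$ for each neighbor $w$ of $v$. The non-backtracking Kemeny's constant $\mathscr{K}_{nb}(G)$ is Kemeny's constant of the non-backtracking random walk on arcs, with transition matrix $P_{nb}$: from $(u,v)$ one moves to $(v,w)$ with probability $1/(\deg(v)-1)$ for each neighbor $w\ne u$ of $v$, all other transition probabilities being $0$. *)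

From HB Require Import structures.
From mathcomp Require Import all_boot all_order all_algebra.
From mathcomp Require Import algC.
Set Implicit Arguments. Unset Strict Implicit. Unset Printing Implicit Defensive.
Import Order.TTheory GRing.Theory Num.Theory.
Local Open Scope ring_scope.

(* Simple graph: symmetric irreflexive relation e on a finite vertex type V. *)

Definition arc (V : finType) (e : rel V) := {p : V * V | e p.1 p.2}.

Definition deg (V : finType) (e : rel V) (v : V) : nat := #|[pred w | e v w]|.


Definition Pe (V : finType) (e : rel V) : 'M[algC]_(#|{: arc e}|) :=
  \matrix_(i, j)
    let a := val (enum_val i) in let b := val (enum_val j) in
    if a.2 == b.1 then ((deg e a.2)%:R)^-1 else 0.

Definition Pnb (V : finType) (e : rel V) : 'M[algC]_(#|{: arc e}|) :=
  \matrix_(i, j)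
    let a := val (enum_val i) in let b := val (enum_val j) in
    if (a.2 == b.1) && (b.2 != a.1) then ((deg e a.2)%:R - 1)^-1 else 0.

Lemma char_poly_split (n : nat) (A : 'M[algC]_n) :
  exists rs : seq algC, char_poly A == \prod_(z <- rs) ('X - z%:P).
Proof.
have [rs Hrs] := closed_field_poly_normal (char_poly A).
by exists rs; rewrite {1}Hrs (monicP (char_poly_monic A)) scale1r.
Qed.

Definition eigenvalues (n : nat) (A : 'M[algC]_n) : seq algC :=
  xchoose (char_poly_split A).

(** Kemeny's constant: sum over eigenvalues rho_2..rho_N (all eigenvalues
    with one copy of the simple eigenvalue 1 removed) of 1/(1 - rho_i). *)
Definition kemeny (n : nat) (A : 'M[algC]_n) : algC :=
  \sum_(z <- rem 1 (eigenvalues A)) (1 - z)^-1.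

Definition Ke (V : finType) (e : rel V) : algC := kemeny (Pe e).
Definition Knb (V : finType) (e : rel V) : algC := kemeny (Pnb e).

From Pilot Require Import Defs.
From HB Require Import structures.
From mathcomp Require Import all_boot all_order all_algebra.
From mathcomp Require Import algC spectral.
From mathcomp Require Import ring.
Set Implicit Arguments. Unset Strict Implicit. Unset Printing Implicit Defensive.
Import Order.TTheory GRing.Theory Num.Theory.
Local Open Scope ring_scope.

(* Let [T] (arcs x vertices) and [S] (vertices x arcs) be the head and tail
   incidence matrices of the [N] arcs of the graph on [n] vertices, and [J] the
   arc reversal.  Then [S T] is the adjacency matrix [A], the edge walk is
   [T S / d] and the non-backtracking walk is [(T S - J) / (d - 1)].
   Sylvester's identity [det (1 - X Y) = det (1 - Y X)] turns the spectrum of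
   the edge walk into [0] ([N - n] times) and the [lambda / d], [lambda] in the
   spectrum of [A].  As [J] is an involution with [S J T = d] and [N / 2]
   eigenvalues [-1], the same identity gives the non-backtracking spectrum:
   [1/(d-1)] and [-1/(d-1)], [N/2 - n] times each, and for every [lambda] the
   two roots of [(d - 1) t^2 - lambda t + 1].  On a connected graph [d] is a
   simple eigenvalue of [A] (its left eigenvectors are harmonic, hence
   constant); it produces the eigenvalue [1] of both walks.  Every other
   [lambda] contributes [d / (d - lambda)] to the edge Kemeny constant and
   [1 + (d - 2) / (d - lambda)] to the non-backtracking one, whence the linear
   relation. *)

Lemma horner_prod_XsubC (R : comNzRingType) (I : Type) (r : seq I) (F : I -> R) t :
  (\prod_(i <- r) ('X - (F i)%:P)).[t] = \prod_(i <- r) (t - F i).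
Proof. by rewrite horner_prod; apply: eq_bigr => i _; rewrite hornerXsubC. Qed.

Lemma poly_eq_cofinite (R : numDomainType) (S : seq R) (p q : {poly R}) :
  (forall t, t \notin S -> p.[t] = q.[t]) -> p = q.
Proof.
move=> eq_pq; apply/eqP; rewrite -subr_eq0.
pose r := (p - q) * \prod_(s <- S) ('X - s%:P).
have r0 : r = 0.
  apply: (@roots_geq_poly_eq0 _ r [seq i%:R | i <- iota 0 (size r)]).
  - apply/allP => _ /mapP[i _ ->]; rewrite /root hornerM hornerD hornerN.
    have [iS | /eq_pq ->] := boolP (i%:R \in S); last by rewrite subrr mul0r.
    by rewrite horner_prod_XsubC (big_rem _ iS) /= subrr mul0r mulr0.
  - by rewrite map_inj_uniq ?iota_uniq // => i j /eqP; rewrite eqr_nat => /eqP.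
  - by rewrite size_map size_iota.
by move/eqP: r0; rewrite mulf_eq0 (negbTE (monic_neq0 (monic_prod_XsubC _ _ _))) orbF.
Qed.

Lemma horner_char_poly (R : comNzRingType) n (A : 'M[R]_n) t :
  (char_poly A).[t] = \det (t%:M - A).
Proof.
rewrite /char_poly -[_.[t]]/(horner_eval t _) -det_map_mx; congr (\det _).
apply/matrixP => i j; rewrite !mxE /horner_eval /=.
by case: (i == j); rewrite /= ?mulr1n ?mulr0n /horner_eval ?hornerE.
Qed.

Lemma det_1_sub_mulmxC (R : comNzRingType) N n (X : 'M[R]_(N, n)) (Y : 'M[R]_(n, N)) :
  \det (1%:M - X *m Y) = \det (1%:M - Y *m X).
Proof.
have lower : block_mx 1%:M X Y 1%:M =
    block_mx 1%:M 0 Y 1%:M *m block_mx 1%:M X 0 (1%:M - Y *m X).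
  by rewrite mulmx_block !mul1mx !mul0mx !mulmx1 !addr0 addrC subrK.
have upper : block_mx 1%:M X Y 1%:M =
    block_mx (1%:M - X *m Y) X 0 1%:M *m block_mx 1%:M 0 Y 1%:M.
  by rewrite mulmx_block !mul1mx !mul0mx !mulmx0 !mulmx1 !add0r subrK.
have := congr1 determinant lower; rewrite upper !det_mulmx.
by rewrite det_lblock !det_ublock !det1 !mul1r ?mulr1.
Qed.

Lemma det_sub_mulmx (R : fieldType) N n (M : 'M[R]_N) (X : 'M[R]_(N, n)) (Y : 'M[R]_(n, N)) :
  M \in unitmx -> \det (M - X *m Y) = \det M * \det (1%:M - Y *m invmx M *m X).
Proof.
move=> uM; have -> : M - X *m Y = M *m (1%:M - invmx M *m X *m Y).
  by rewrite mulmxBr mulmx1 !mulmxA mulmxV // mul1mx.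
by rewrite det_mulmx det_1_sub_mulmxC mulmxA.
Qed.

Lemma size_char_poly_roots (R : comNzRingType) n (A : 'M[R]_n) (I : Type) (r : seq I)
    (F : I -> R) :
  char_poly A = \prod_(i <- r) ('X - (F i)%:P) -> size r = n.
Proof. by move=> charA; have := size_char_poly A; rewrite charA size_prod_XsubC => -[]. Qed.

Lemma det_scalar_subZ (R : fieldType) n (A : 'M[R]_n) (I : Type) (r : seq I) (F : I -> R) a b :
  char_poly A = \prod_(i <- r) ('X - (F i)%:P) ->
  \det (a%:M - b *: A) = \prod_(i <- r) (a - b * F i).
Proof.
move=> charA; have size_r := size_char_poly_roots charA.
have [-> | b0] := eqVneq b 0.
  rewrite scale0r subr0 det_scalar (eq_bigr (fun=> a)) => [|i _]; last by rewrite mul0r subr0.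
  by rewrite big_const_seq count_predT size_r iter_mulr_1.
have -> : a%:M - b *: A = b *: ((a / b)%:M - A).
  by rewrite scalerBr scale_scalar_mx mulrC divfK.
rewrite detZ -horner_char_poly charA horner_prod_XsubC -size_r.
rewrite -[b ^+ _]iter_mulr_1 -(count_predT r) -big_const_seq -big_split /=.
by apply: eq_bigr => i _; rewrite mulrBr mulrC divfK.
Qed.

Lemma char_poly_scale (R : numFieldType) n (A : 'M[R]_n) (I : Type) (r : seq I) (F : I -> R) c :
  char_poly A = \prod_(i <- r) ('X - (F i)%:P) ->
  char_poly (c *: A) = \prod_(i <- r) ('X - (c * F i)%:P).
Proof.
move=> charA; apply: (@poly_eq_cofinite _ [::]) => t _.
by rewrite horner_char_poly (det_scalar_subZ _ _ charA) horner_prod_XsubC.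
Qed.

Lemma char_poly_mulmxC (R : numFieldType) N n (X : 'M[R]_(N, n)) (Y : 'M[R]_(n, N)) :
  'X^n * char_poly (X *m Y) = 'X^N * char_poly (Y *m X).
Proof.
apply: (@poly_eq_cofinite _ [:: 0]) => t; rewrite inE => t0.
have det_scalar_sub m (M : 'M[R]_m) : \det (t%:M - M) = t ^+ m * \det (1%:M - t^-1 *: M).
  by rewrite -detZ scalerBr scalemx1 scalerA divff // scale1r.
rewrite !hornerM !hornerXn !horner_char_poly !det_scalar_sub.
by rewrite scalemxAr det_1_sub_mulmxC -scalemxAl mulrCA.
Qed.

Lemma char_poly_conj (R : numFieldType) n (P A : 'M[R]_n) :
  P \in unitmx -> char_poly (invmx P *m A *m P) = char_poly A.
Proof.
move=> uP; apply: (@poly_eq_cofinite _ [::]) => t _; rewrite !horner_char_poly.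
have -> : t%:M - invmx P *m A *m P = invmx P *m (t%:M - A) *m P.
  by rewrite mulmxBr mulmxBl mul_mx_scalar -scalemxAl mulVmx // scalemx1.
by rewrite !det_mulmx det_inv mulrAC mulVf ?mul1r // -unitfE -unitmxE.
Qed.

Lemma char_poly_diag_conj (R : numFieldType) n (P : 'M[R]_n) (l : 'rV[R]_n) :
  P \in unitmx -> char_poly (invmx P *m diag_mx l *m P) = \prod_i ('X - (l 0 i)%:P).
Proof.
move=> uP; rewrite char_poly_conj // char_poly_trig ?diag_mx_is_trig //.
by apply: eq_bigr => i _; rewrite mxE eqxx.
Qed.

Lemma kemeny_char_poly n (M : 'M[algC]_n) (s : seq algC) :
  char_poly M = ('X - 1) * \prod_(z <- s) ('X - z%:P) ->
  kemeny M = \sum_(z <- s) (1 - z)^-1.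
Proof.
move=> charM; rewrite /kemeny; apply: perm_big.
have eig_perm : perm_eq (eigenvalues M) (1 :: s).
  by apply: prod_XsubC_eq; rewrite big_cons -charM; exact/esym/eqP/(xchooseP (char_poly_split M)).
have eig1 : 1 \in eigenvalues M by rewrite (perm_mem eig_perm) mem_head.
by rewrite -(perm_cons 1) -(permPr eig_perm) perm_sym perm_to_rem.
Qed.

(* A normal involution is diagonalisable with eigenvalues [1] and [-1]; a
   zero trace forces the two eigenvalues to have equal multiplicity. *)
Lemma det_scalar_add_involution (C : numClosedFieldType) N (J : 'M[C]_N) :
  J \is normalmx -> J *m J = 1%:M -> \tr J = 0 ->
  ~~ odd N /\ forall a b, \det (a%:M + b *: J) = (a ^+ 2 - b ^+ 2) ^+ N./2.
Proof.
move=> /orthomx_spectralP; set P := spectralmx J; set mu := spectral_diag J.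
move=> defJ JJ trJ0; have uP : P \in unitmx := spectral_unit J.
have defD : diag_mx mu = P *m J *m invmx P.
  by rewrite defJ !mulmxA mulmxV // mul1mx mulmxK.
have mu_sq i : mu 0 i ^+ 2 = 1.
  have : diag_mx mu *m diag_mx mu = 1%:M.
    by rewrite defD !mulmxA mulmxKV // -(mulmxA P) JJ mulmx1 mulmxV.
  by move/matrixP/(_ i i); rewrite mulmx_diag !mxE eqxx /= mulr1n -expr2.
have mu_sum : \sum_i mu 0 i = 0.
  by rewrite -mxtrace_diag defD mxtrace_mulC mulKmx.
pose A := [pred i | mu 0 i == 1].
have muN1 i : i \notin A -> mu 0 i = -1.
  by rewrite inE; have /eqP := mu_sq i; rewrite sqrf_eq1 => /orP[] /eqP ->; rewrite ?eqxx.
have cardA : #|A| = #|[predC A]|.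
  apply/eqP; rewrite -(eqr_nat C) -subr_eq0; apply/eqP; rewrite -mu_sum (bigID (mem A)) /=.
  rewrite -!sumr_const -sumrN; congr (_ + _); apply: eq_bigr => i.
    by move/eqP.
  by move/muN1 ->.
have N_double : N = #|A|.*2 by rewrite -addnn {2}cardA cardC card_ord.
split=> [|a b]; first by rewrite N_double odd_double.
have charJ := char_poly_diag_conj mu uP; rewrite -defJ in charJ.
rewrite -[b *: J]opprK -scaleNr (det_scalar_subZ _ _ charJ) [in RHS]N_double doubleK.
rewrite subr_sqr exprMn mulrC {2}cardA -!prodr_const (bigID (mem A)) /=.
by congr (_ * _); apply: eq_bigr => i; [move/eqP -> | move/muN1 ->]; rewrite ?mulr1 ?mulrN1 opprK.
Qed.

Section NonBacktrackingPencil.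

Variables (R : fieldType) (N n : nat) (T : 'M[R]_(N, n)) (S : 'M[R]_(n, N)).
Variables (J : 'M[R]_N) (d : R).
Hypotheses (JJ : J *m J = 1%:M) (SJT : S *m (J *m T) = d%:M).

Lemma det_nonbacktracking_pencil (c t : R) (I : Type) (r : seq I) (F : I -> R) :
  char_poly (S *m T) = \prod_(i <- r) ('X - (F i)%:P) -> t ^+ 2 != c ^+ 2 ->
  \det (t%:M - c *: (T *m S - J)) =
  \det (t%:M + c *: J) / (t ^+ 2 - c ^+ 2) ^+ n *
  \prod_(i <- r) (t ^+ 2 + c ^+ 2 * (d - 1) - c * t * F i).
Proof.
move=> charST; rewrite -subr_eq0 => D0; set D := t ^+ 2 - c ^+ 2 in D0 *.
set M := t%:M + c *: J.
have MK : M *m (D^-1 *: (t%:M - c *: J)) = 1%:M.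
  rewrite -scalemxAr mulmxDl !mulmxBr mul_mx_scalar mul_scalar_mx mul_mx_scalar.
  rewrite -scalemxAl -scalemxAr JJ !scalerA scalemx1 scale_scalar_mx addrA subrK.
  by rewrite -raddfB /= scale_scalar_mx -!expr2 mulVf.
have uM : M \in unitmx by case: (mulmx1_unit MK).
have invM : invmx M = D^-1 *: (t%:M - c *: J).
  by rewrite -[invmx M]mulmx1 -MK mulmxA mulVmx // mul1mx.
have -> : t%:M - c *: (T *m S - J) = M - (c *: T) *m S.
  by rewrite /M scalerBr opprB addrA -scalemxAl.
rewrite det_sub_mulmx // invM.
have -> : 1%:M - S *m (D^-1 *: (t%:M - c *: J)) *m (c *: T) =
    D^-1 *: ((t ^+ 2 + c ^+ 2 * (d - 1))%:M - (c * t) *: (S *m T)).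
  rewrite -!scalemxAr -scalemxAl mulmxBr mulmxBl mul_mx_scalar -scalemxAr -!scalemxAl -mulmxA SJT.
  rewrite !scalerBr !scalerA !scale_scalar_mx opprB addrA -raddfD /=.
  by congr (_%:M - _ *: _); rewrite /D; field.
by rewrite detZ (det_scalar_subZ _ _ charST) exprVn mulrA.
Qed.

End NonBacktrackingPencil.

Lemma symmetric_natmx_normal (C : numClosedFieldType) n (r : 'I_n -> 'I_n -> bool) :
  (forall i j, r i j = r j i) -> \matrix_(i, j) (r i j)%:R \is @normalmx C n.
Proof.
move=> r_sym; apply/normalmxP; set M := \matrix_(i, j) _.
suff -> : map_mx Num.conj M^T = M by [].
by apply/matrixP => i j; rewrite !mxE conjC_nat r_sym.
Qed.

Lemma sum_enum_val (R : nmodType) (T : finType) (F : T -> R) :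
  \sum_(i < #|T|) F (enum_val i) = \sum_x F x.
Proof. by rewrite -big_enum_val. Qed.

Lemma sum_eq_mul_eq (R : pzSemiRingType) (T : finType) (x y : T) :
  \sum_v ((x == v)%:R * (y == v)%:R) = (x == y)%:R :> R.
Proof.
rewrite (bigD1 x) //= eqxx mul1r big1 ?addr0 ?(eq_sym y) // => v.
by rewrite eq_sym => /negbTE ->; rewrite mul0r.
Qed.

Section Harmonic.

Variables (C : numClosedFieldType) (V : finType) (e : rel V) (k : C) (f : V -> C).
Hypotheses (e_sym : symmetric e) (e_reg : forall x, \sum_y (e x y)%:R = k).
Hypothesis f_harmonic : forall x, \sum_y (e x y)%:R * f y = k * f x.

(* Harmonicity makes [sum_(x,y) e(x,y) (f x - f y) (f x)^*] vanish; adding its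
   image under [x <-> y] gives the Dirichlet form [sum_(x,y) e(x,y) |f x - f y|^2]. *)
Lemma harmonic_edge_eq x y : e x y -> f x = f y.
Proof.
pose form x y := (e x y)%:R * ((f x - f y) * (f x)^*).
have half : \sum_x \sum_y form x y = 0.
  rewrite big1 // => u _; under eq_bigr do rewrite /form mulrA.
  rewrite -mulr_suml (eq_bigr _ (fun v _ => mulrBr _ _ _)) sumrB -mulr_suml.
  by rewrite e_reg f_harmonic subrr mul0r.
have dirichlet : \sum_x \sum_y (e x y)%:R * ((f x - f y) * (f x - f y)^*) = 0.
  transitivity (\sum_x \sum_y form x y + \sum_x \sum_y form y x).
    rewrite -big_split; apply: eq_bigr => u _; rewrite -big_split; apply: eq_bigr => v _.
    by rewrite /form (e_sym v) rmorphB /=; ring.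
  by rewrite [X in _ + X]exchange_big half addr0.
have term_ge0 u v : 0 <= (e u v)%:R * ((f u - f v) * (f u - f v)^*).
  by rewrite mulr_ge0 ?ler0n ?mul_conjC_ge0.
move=> exy; have row0 := psumr_eq0P (fun u _ => sumr_ge0 _ (fun v _ => term_ge0 u v)) dirichlet.
have /(_ y isT) := psumr_eq0P (fun v _ => term_ge0 x v) (row0 x isT).
by rewrite exy mul1r => /eqP; rewrite mul_conjC_eq0 subr_eq0 => /eqP.
Qed.

Lemma harmonic_const : (forall x y, connect e x y) -> forall x y, f x = f y.
Proof.
move=> e_conn x y; have /connectP[p xp ->] := e_conn x y.
by elim: p x xp => [|z p IHp] x //= /andP[/harmonic_edge_eq -> /IHp].
Qed.
End Harmonic.

Lemma unitmx_const_rows_eq (R : fieldType) n (P : 'M[R]_n) i j :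
  P \in unitmx -> (forall a b, P i a = P i b) -> (forall a b, P j a = P j b) -> i = j.
Proof.
move=> uP Pi Pj; apply/eqP; apply: contraT => ij.
have row_eq0 (w : 'rV[R]_n) : w *m P = 0 -> w = 0 by rewrite -{2}(mulmxK uP w) => ->; rewrite mul0mx.
pose w : 'rV[R]_n := P j i *: delta_mx 0 i - P i i *: delta_mx 0 j.
have w0 : w = 0.
  apply/row_eq0/rowP => a; rewrite mulmxBl -!scalemxAl -!rowE !mxE.
  by rewrite (Pi a i) (Pj a i) mulrC subrr.
have /rowP/(_ j) := w0; rewrite !mxE !eqxx (eq_sym j) (negbTE ij) /=.
rewrite mulr0 mulr1 sub0r => /eqP; rewrite oppr_eq0 => /eqP Pii0.
have := row_eq0 (delta_mx 0 i).
have -> : (delta_mx 0 i : 'rV[R]_n) *m P = 0.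
  by apply/rowP => a; rewrite -rowE !mxE (Pi a i) Pii0.
by move=> /(_ erefl)/matrixP/(_ 0 i); rewrite !mxE !eqxx => /eqP; rewrite oner_eq0.
Qed.

Definition quad_roots (sigma pi : algC) : seq algC :=
  let delta := sqrtC (sigma ^+ 2 - 4 * pi) in [:: (sigma + delta) / 2; (sigma - delta) / 2].

Lemma prod_quad_roots sigma pi t :
  \prod_(w <- quad_roots sigma pi) (t - w) = t ^+ 2 - sigma * t + pi.
Proof.
rewrite !big_cons big_nil mulr1; set delta := sqrtC _.
have -> : (t - (sigma + delta) / 2) * (t - (sigma - delta) / 2) =
    t ^+ 2 - sigma * t + (sigma ^+ 2 - delta ^+ 2) / 4 by field.
by rewrite sqrtCK; field.
Qed.

Lemma sum_inv_quad_roots sigma pi : 1 - sigma + pi != 0 ->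
  \sum_(w <- quad_roots sigma pi) (1 - w)^-1 = (2 - sigma) / (1 - sigma + pi).
Proof.
have := prod_quad_roots sigma pi 1; rewrite expr1n mulr1 => <-.
rewrite /quad_roots !big_cons !big_nil mulr1 addr0; set delta := sqrtC _.
set a := (sigma + delta) / 2; set b := (sigma - delta) / 2.
have -> : sigma = a + b by rewrite /a /b; field.
move=> ab0; have [a0 b0] : 1 - a != 0 /\ 1 - b != 0.
  by split; apply: contraNneq ab0 => ->; rewrite ?mul0r ?mulr0.
by field; rewrite a0 b0.
Qed.

Section RegularGraph.

Variables (V : finType) (e : rel V) (d : nat).
Hypotheses (e_sym : symmetric e) (e_irr : irreflexive e).
Hypothesis e_conn : forall x y : V, connect e x y.
Hypothesis e_reg : forall v : V, deg e v = d.

Local Notation N := #|{: Defs.arc e}|.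
Local Notation n := #|V|.
Local Notation arc_at i := (val (enum_val i)).

Definition targetmx : 'M[algC]_(N, n) := \matrix_(i, v) ((arc_at i).2 == enum_val v)%:R.
Definition sourcemx : 'M[algC]_(n, N) := \matrix_(v, i) ((arc_at i).1 == enum_val v)%:R.
Definition reversalmx : 'M[algC]_N :=
  \matrix_(i, j) (arc_at j == ((arc_at i).2, (arc_at i).1))%:R.
Definition adjmx : 'M[algC]_n := \matrix_(u, v) (e (enum_val u) (enum_val v))%:R.

Definition arc_rev (a : Defs.arc e) : Defs.arc e :=
  exist _ ((val a).2, (val a).1) (etrans (e_sym _ _) (valP a)).

Lemma natr_deg u : (deg e u)%:R = \sum_v (e u v)%:R :> algC.
Proof.
rewrite /deg -sum1_card natr_sum big_mkcond /=.
by apply: eq_bigr => v _; rewrite inE; case: (e u v).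
Qed.

Lemma sum_arcs_between u v : \sum_(a : Defs.arc e) (val a == (u, v))%:R = (e u v)%:R :> algC.
Proof.
have [euv | neuv] := boolP (e u v).
  rewrite (bigD1 (exist _ (u, v) euv)) //= eqxx big1 ?addr0 // => a ne.
  by case: eqP => // E; case/eqP: ne; exact: val_inj.
by rewrite big1 // => a _; case: eqP => // E; case/negP: neuv; have := valP a; rewrite E.
Qed.

Lemma sum_arcs_from u : \sum_(a : Defs.arc e) ((val a).1 == u)%:R = (deg e u)%:R :> algC.
Proof.
transitivity (\sum_(a : Defs.arc e) \sum_v (val a == (u, v))%:R : algC).
  apply: eq_bigr => -[[x y] exy] _; rewrite (bigD1 y) //= big1 ?addr0 => [|v].
    by rewrite xpair_eqE eqxx andbT.
  by rewrite xpair_eqE eq_sym => /negbTE ->; rewrite andbF.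
by rewrite exchange_big natr_deg; apply: eq_bigr => v _; rewrite sum_arcs_between.
Qed.

Lemma card_arc : N = (n * d)%N.
Proof.
apply/eqP; rewrite -(eqr_nat algC) natrM -sumr_const; apply/eqP.
transitivity (\sum_(a : Defs.arc e) \sum_u ((val a).1 == u)%:R : algC).
  by apply: eq_bigr => a _; rewrite (bigD1 (val a).1) //= eqxx big1 ?addr0 // => u; rewrite eq_sym => /negbTE ->.
rewrite exchange_big (eq_bigr (fun=> d%:R)) => [|u _]; last by rewrite sum_arcs_from e_reg.
by rewrite sumr_const mulr_natl.
Qed.

Lemma targetmx_sourcemx :
  targetmx *m sourcemx = \matrix_(i, j) ((arc_at i).2 == (arc_at j).1)%:R.
Proof.
apply/matrixP => i j; rewrite !mxE; under eq_bigr do rewrite !mxE.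
by rewrite (sum_enum_val (fun v => ((arc_at i).2 == v)%:R * ((arc_at j).1 == v)%:R)) sum_eq_mul_eq.
Qed.

Lemma sourcemx_targetmx : sourcemx *m targetmx = adjmx.
Proof.
apply/matrixP => u v; rewrite !mxE; under eq_bigr do rewrite !mxE.
rewrite (sum_enum_val (fun a => ((val a).1 == enum_val u)%:R * ((val a).2 == enum_val v)%:R)).
rewrite -sum_arcs_between; apply: eq_bigr => -[[x y] exy] _ /=.
by rewrite xpair_eqE; case: eqP; case: eqP; rewrite ?mulr1 ?mulr0.
Qed.

Lemma mul_reversalmx m (M : 'M[algC]_(N, m)) i k :
  (reversalmx *m M) i k = M (enum_rank (arc_rev (enum_val i))) k.
Proof.
rewrite mxE (bigD1 (enum_rank (arc_rev (enum_val i)))) //= mxE enum_rankK eqxx mul1r.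
rewrite big1 ?addr0 // => j ne; rewrite mxE; case: eqP => [E|]; last by rewrite mul0r.
by case/eqP: ne; rewrite -[j]enum_valK; congr enum_rank; exact: val_inj.
Qed.

Lemma reversalmx_involutive : reversalmx *m reversalmx = 1%:M.
Proof.
apply/matrixP => i k; rewrite mul_reversalmx !mxE enum_rankK /= -surjective_pairing.
by rewrite val_eqE (inj_eq enum_val_inj) eq_sym.
Qed.

Lemma reversalmx_targetmx : reversalmx *m targetmx = sourcemx^T.
Proof. by apply/matrixP => i v; rewrite mul_reversalmx !mxE enum_rankK. Qed.

Lemma sourcemx_reversalmx_targetmx : sourcemx *m (reversalmx *m targetmx) = (d%:R)%:M.
Proof.
rewrite reversalmx_targetmx; apply/matrixP => u v; rewrite !mxE; under eq_bigr do rewrite !mxE.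
rewrite (sum_enum_val (fun a => ((val a).1 == enum_val u)%:R * ((val a).1 == enum_val v)%:R)).
case: eqVneq => [<- | uv].
  rewrite mulr1n -(e_reg (enum_val u)) -sum_arcs_from.
  by apply: eq_bigr => a _; case: eqP; rewrite ?mulr1 ?mulr0.
rewrite mulr0n big1 // => a _; case: eqP => [->|]; last by rewrite mul0r.
by rewrite (inj_eq enum_val_inj) (negbTE uv) mulr0.
Qed.

Lemma mxtrace_reversalmx : \tr reversalmx = 0.
Proof.
rewrite /mxtrace big1 // => i _; rewrite mxE; case: eqP => // E.
by have := valP (enum_val i); rewrite {1}E /= e_irr.
Qed.

Lemma reversalmx_normal : reversalmx \is normalmx.
Proof.
apply: symmetric_natmx_normal => i j.
by rewrite [arc_at i]surjective_pairing [arc_at j]surjective_pairing !xpair_eqE andbC (eq_sym (arc_at i).1) (eq_sym (arc_at i).2).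
Qed.

Lemma adjmx_normal : adjmx \is normalmx.
Proof. exact: symmetric_natmx_normal. Qed.

Lemma det_scalar_add_reversalmx :
  ~~ odd N /\ forall a b, \det (a%:M + b *: reversalmx) = (a ^+ 2 - b ^+ 2) ^+ N./2.
Proof.
exact: det_scalar_add_involution reversalmx_normal reversalmx_involutive mxtrace_reversalmx.
Qed.

Lemma Pe_E : Pe e = targetmx *m ((d%:R)^-1 *: sourcemx).
Proof.
rewrite -scalemxAr targetmx_sourcemx; apply/matrixP => i j; rewrite !mxE /= e_reg.
by case: eqP; rewrite ?mulr1 ?mulr0.
Qed.

Lemma Pnb_E : Pnb e = (d%:R - 1)^-1 *: (targetmx *m sourcemx - reversalmx).
Proof.
rewrite targetmx_sourcemx; apply/matrixP => i j; rewrite !mxE /= e_reg.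
case: (arc_at i) => a1 a2; case: (arc_at j) => b1 b2 /=.
rewrite xpair_eqE (eq_sym b1).
by case: (a2 == b1); case: (b2 == a1); rewrite /= ?subrr ?mulr0 ?subr0 ?mulr1.
Qed.

Lemma adjmx_left_eigen_const (w : 'rV[algC]_n) :
  w *m adjmx = d%:R *: w -> forall i j, w 0 i = w 0 j.
Proof.
move=> wA i j; pose f x := w 0 (enum_rank x).
have f_reg x : \sum_y (e x y)%:R = d%:R :> algC by rewrite -natr_deg e_reg.
have f_harm x : \sum_y (e x y)%:R * f y = d%:R * f x.
  have /rowP/(_ (enum_rank x)) := wA; rewrite !mxE => <-.
  rewrite -(sum_enum_val (fun y => (e x y)%:R * f y)); apply: eq_bigr => u _.
  by rewrite !mxE /f enum_valK enum_rankK mulrC e_sym.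
have := harmonic_const e_sym f_reg f_harm e_conn (enum_val i) (enum_val j).
by rewrite /f !enum_valK.
Qed.

Lemma det_degree_sub_adjmx : (0 < n)%N -> \det (d%:R%:M - adjmx) = 0.
Proof.
move=> n_gt0; apply/eqP/det0P; exists (const_mx 1).
  by apply/negP => /eqP/rowP/(_ (Ordinal n_gt0)); rewrite !mxE => /eqP; rewrite oner_eq0.
apply/rowP => k; rewrite mulmxBr mul_mx_scalar !mxE mulr1 -(e_reg (enum_val k)) natr_deg.
rewrite -(sum_enum_val (fun y => (e (enum_val k) y)%:R)); apply/eqP; rewrite subr_eq0.
by apply/eqP/eq_bigr => u _; rewrite !mxE mul1r e_sym.
Qed.

Lemma adjmx_char_poly : (0 < n)%N ->
  exists2 s : seq algC,
    char_poly adjmx = ('X - (d%:R)%:P) * \prod_(z <- s) ('X - z%:P) & d%:R \notin s.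
Proof.
move=> n_gt0; have /orthomx_spectralP := adjmx_normal.
set P := spectralmx adjmx; set l := spectral_diag adjmx => defA.
have uP : P \in unitmx := spectral_unit adjmx.
have charA := char_poly_diag_conj l uP; rewrite -defA in charA.
have eig_const i : l 0 i = d%:R -> forall a b, P i a = P i b.
  move=> li a b; have rowA : row i P *m adjmx = d%:R *: row i P.
    by rewrite -row_mul {1}defA !mulmxA mulmxV // mul1mx row_mul row_diag_mx -scalemxAl -rowE li.
  by have := adjmx_left_eigen_const rowA a b; rewrite !mxE.
have [i0 li0] : exists i0, l 0 i0 = d%:R.
  have := det_degree_sub_adjmx n_gt0; rewrite -horner_char_poly charA horner_prod_XsubC.
  move/eqP; rewrite prodf_seq_eq0 => /hasP[i _].
  by rewrite subr_eq0 => /eqP di; exists i.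
exists [seq l 0 i | i <- enum (predC1 i0)].
  by rewrite charA (bigD1 i0) //= li0 big_map big_enum.
apply/mapP => -[j]; rewrite mem_enum inE => ji0 /esym lj.
by case/eqP: ji0; apply: (unitmx_const_rows_eq uP); apply: eig_const.
Qed.

Hypothesis d_gt1 : (1 < d)%N.

Local Notation q := (d%:R - 1 : algC).

Lemma degree_neq0 : d%:R != 0 :> algC.
Proof. by rewrite pnatr_eq0 -lt0n ltnW. Qed.

Lemma degree_pred_neq0 : q != 0.
Proof. by rewrite subr_eq0 pnatr_eq1 eq_sym (ltn_eqF d_gt1). Qed.

Lemma Ke_regular (s : seq algC) :
  char_poly adjmx = ('X - (d%:R)%:P) * \prod_(z <- s) ('X - z%:P) ->
  Ke e = n%:R * (d%:R - 1) + \sum_(z <- s) (1 - z / d%:R)^-1.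
Proof.
move=> charA; have n_le_N : (n <= N)%N by rewrite card_arc leq_pmulr // ltnW.
have charPe : char_poly (Pe e) =
    'X^(N - n) * \prod_(z <- d%:R :: s) ('X - ((d%:R)^-1 * z)%:P).
  apply: (@mulfI _ ('X^n)); first by rewrite monic_neq0 ?monicXn.
  rewrite Pe_E char_poly_mulmxC mulrA -exprD subnKC // -scalemxAl sourcemx_targetmx.
  by congr (_ * _); apply: (char_poly_scale (F := id)); rewrite big_cons.
rewrite /Ke (@kemeny_char_poly _ _ (nseq (N - n) 0 ++ [seq z / d%:R | z <- s])).
  rewrite big_cat big_nseq big_map iter_addr_0 subr0 invr1 natrB // card_arc natrM.
  by rewrite mulrBr mulr1.
rewrite charPe big_cons mulVf ?degree_neq0 // mulrCA big_cat big_nseq subr0 iter_mulr_1 big_map.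
by congr (_ * (_ * _)); apply: eq_bigr => z _; rewrite mulrC.
Qed.

Lemma leq_half_card_arc : (n <= N./2)%N.
Proof. by rewrite card_arc geq_half_double -muln2 leq_mul2l d_gt1 orbT. Qed.

Lemma natr_half_card_arc_sub : (N./2 - n)%:R = n%:R * (d%:R - 2) / 2 :> algC.
Proof.
have [N_even _] := det_scalar_add_reversalmx.
have half : (N./2)%:R = N%:R / 2 :> algC.
  by rewrite -[in RHS](odd_double_half N) (negbTE N_even) add0n -mul2n natrM; field.
by rewrite natrB ?leq_half_card_arc // half card_arc natrM; field.
Qed.

Lemma char_poly_Pnb (s : seq algC) :
  char_poly adjmx = ('X - (d%:R)%:P) * \prod_(z <- s) ('X - z%:P) ->
  char_poly (Pnb e) = ('X - 1) * \prod_(z <- q^-1 :: nseq (N./2 - n) q^-1 ++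
      nseq (N./2 - n) (- q^-1) ++ flatten [seq quad_roots (z / q) q^-1 | z <- s]) ('X - z%:P).
Proof.
move=> charA; have [_ detJ] := det_scalar_add_reversalmx.
have charST : char_poly (sourcemx *m targetmx) = \prod_(z <- d%:R :: s) ('X - z%:P).
  by rewrite sourcemx_targetmx big_cons.
apply: (@poly_eq_cofinite _ [:: q^-1; - q^-1]) => t; rewrite !inE negb_or => /andP[tq tNq].
have t2 : t ^+ 2 != q^-1 ^+ 2 by rewrite eqf_sqr negb_or tq tNq.
have t2_neq0 : t ^+ 2 - q^-1 ^+ 2 != 0 by rewrite subr_eq0.
rewrite horner_char_poly Pnb_E.
rewrite (det_nonbacktracking_pencil reversalmx_involutive sourcemx_reversalmx_targetmx charST t2).
have -> : \det (t%:M + q^-1 *: reversalmx) / (t ^+ 2 - q^-1 ^+ 2) ^+ n =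
    (t ^+ 2 - q^-1 ^+ 2) ^+ (N./2 - n).
  by rewrite detJ -{1}(subnK leq_half_card_arc) exprD mulfK ?expf_neq0.
rewrite big_cons hornerM horner_prod_XsubC.
have -> : ('X - 1).[t] = t - 1 by rewrite !hornerE.
rewrite big_cons !big_cat !big_nseq !iter_mulr_1 big_flatten /= big_map.
have deg_factor : t ^+ 2 + q^-1 ^+ 2 * (d%:R - 1) - q^-1 * t * d%:R = (t - 1) * (t - q^-1).
  by field; exact: degree_pred_neq0.
have quad z : t ^+ 2 + q^-1 ^+ 2 * (d%:R - 1) - q^-1 * t * z =
    \prod_(w <- quad_roots (z / q) q^-1) (t - w).
  by rewrite prod_quad_roots; field; exact: degree_pred_neq0.
have -> : t ^+ 2 - q^-1 ^+ 2 = (t - q^-1) * (t + q^-1) by ring.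
rewrite deg_factor exprMn (eq_bigr _ (fun z _ => quad z)) opprK.
by move: (_ ^+ _) (_ ^+ _) => x y; ring.
Qed.

Lemma Knb_regular (s : seq algC) :
  char_poly adjmx = ('X - (d%:R)%:P) * \prod_(z <- s) ('X - z%:P) -> d%:R \notin s ->
  Knb e = (1 - q^-1)^-1 + n%:R * (d%:R - 2) / 2 * ((1 - q^-1)^-1 + (1 + q^-1)^-1) +
          (n%:R - 1) + (d%:R - 2) / d%:R * \sum_(z <- s) (1 - z / d%:R)^-1.
Proof.
move=> charA d_notin; have size_s : (size s)%:R = n%:R - 1 :> algC.
  have charA' : char_poly adjmx = \prod_(z <- d%:R :: s) ('X - z%:P) by rewrite big_cons.
  by rewrite -(size_char_poly_roots (F := id) charA') /= mulrSr addrK.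
rewrite /Knb (kemeny_char_poly (char_poly_Pnb charA)) -natr_half_card_arc_sub -size_s.
rewrite big_cons !big_cat !big_nseq !iter_addr_0 big_flatten /= big_map.
rewrite (eq_big_seq (fun z => 1 + (d%:R - 2) / d%:R * (1 - z / d%:R)^-1)) => [|z zs].
  by rewrite big_split /= -mulr_sumr -sum1_size natr_sum opprK mulrDr !mulr_natl !addrA.
have dz : d%:R - z != 0 by rewrite subr_eq0; apply: contraNneq d_notin => ->.
have q0 := degree_pred_neq0; rewrite sum_inv_quad_roots.
  by field; rewrite degree_neq0 dz q0.
have -> : 1 - z / q + q^-1 = (d%:R - z) / q by field.
by rewrite mulf_neq0 ?invr_eq0.
Qed.

End RegularGraph.

Theorem theorem3p2 (V : finType) (e : rel V) (d : nat)
  (e_sym : symmetric e) (e_irr : irreflexive e)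
  (e_conn : forall x y : V, connect e x y)
  (e_reg : forall v : V, deg e v = d)
  (V_nonempty : (0 < #|V|)%N) (d_ge3 : (3 <= d)%N) :
  Knb e = (d%:R - 2) * Ke e / d%:R + 2 * (#|V|)%:R + (d%:R - 2)^-1
          - (#|V|)%:R / d%:R.
Proof.
have d_gt1 : (1 < d)%N by apply: leq_trans d_ge3.
have [s charA d_notin] := adjmx_char_poly e_sym e_conn e_reg V_nonempty.
rewrite (Knb_regular e_sym e_irr e_reg d_gt1 charA d_notin) (Ke_regular e_reg d_gt1 charA).
have d2 : d%:R - 2 != 0 :> algC by rewrite subr_eq0 (eqr_nat _ d 2) gtn_eqF.
by field; rewrite (degree_neq0 d_gt1) (degree_pred_neq0 d_gt1) d2.
Qed.
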